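(* Let $H=(V,E,w)$ be a hypergraph, $f\in\mathbb{R}^n$, and $e\in E$ a hyperedge with $\mathrm{rank}(e)\ge 2$. Then $$\Big(\max_{u\in e}f(u)+\min_{v\in e}f(v)\Big)^2\le\sum_{\{u,v\}\subseteq e,\ u\ne v}\frac{1}{\mathrm{rank}(e)-1}\big(f(u)+f(v)\big)^2,$$ where the sum is over unordered pairs of distinct vertices of $e$. Equality holds if and only if at most one vertex $v\in e$ has $f(v)\ne0$, or $\mathrm{rank}(e)=2$.
   Context: A hypergraph $H=(V,E,w)$ has vertex set $V$ with $|V|=n$, hyperedges $E$ (subsets of $V$) and positive weights; $\mathrm{rank}(e)=|e|$. *)

From mathcomp Require Import all_boot all_order all_algebra.
Set Implicit Arguments. Unset Strict Implicit. Unset Printing Implicit Defensive.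
Import Order.TTheory GRing.Theory Num.Theory.
Local Open Scope ring_scope.

Definition hypergraph (R : realFieldType) (n : nat)
  (E : {set {set 'I_n}}) (w : {set 'I_n} -> R) : Prop :=
  forall e, e \in E -> 0 < w e.

Definition rank (n : nat) (e : {set 'I_n}) : nat := #|e|.

(* max_{u in e} f u and min_{u in e} f u (meaningful for nonempty e;
   the seed is an element of e, so it does not affect the value). *)
Definition emax (R : realFieldType) (n : nat) (e : {set 'I_n}) (f : 'I_n -> R) : R :=
  if [pick u in e] is Some u0 then \big[Num.max/f u0]_(u in e) f u else 0.
Definition emin (R : realFieldType) (n : nat) (e : {set 'I_n}) (f : 'I_n -> R) : R :=
  if [pick u in e] is Some u0 then \big[Num.min/f u0]_(u in e) f u else 0.

From mathcomp Require Import all_boot all_order all_algebra.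
From mathcomp Require Import ring.

Set Implicit Arguments.
Unset Strict Implicit.
Unset Printing Implicit Defensive.

Import Order.TTheory GRing.Theory Num.Theory.
Local Open Scope ring_scope.

(* Let the maximum M and the minimum m of f on e be attained at distinct
   vertices a and b, put S = e :\ a :\ b and k = #|e|.  Expanding the squares,
   the sum over pairs is (k - 2) \sum_e f^2 + (\sum_e f)^2, and subtracting
   (k - 1) (M + m)^2 leaves
     k \sum_S f^2 + 2 \sum_S (M - f x) (f x - m) + (\sum_S f)^2,
   three nonnegative terms since m <= f x <= M.  This vanishes iff f is zero on
   S and either S is empty (k = 2) or M m = 0, i.e. iff f has at most one
   nonzero value on e or k = 2. *)

Section Extrema.
Variables (R : realFieldType) (n : nat) (e : {set 'I_n}) (f : 'I_n -> R).

Lemma le_emax u : u \in e -> f u <= emax e f.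
Proof.
move=> ue; rewrite /emax; case: pickP => [u0 _|/(_ u)]; last by rewrite ue.
exact: le_bigmax_cond.
Qed.

Lemma emin_le u : u \in e -> emin e f <= f u.
Proof.
move=> ue; rewrite /emin; case: pickP => [u0 _|/(_ u)]; last by rewrite ue.
exact: bigmin_le_cond.
Qed.

Lemma emax_attained : e != set0 -> exists2 a, a \in e & emax e f = f a.
Proof.
case/set0Pn=> u ue; rewrite /emax.
case: pickP => [u0 u0e|/(_ u)]; last by rewrite ue.
apply: (big_ind (fun y => exists2 a, a \in e & y = f a)).
- by exists u0.
- move=> x y [a ae ->] [b be ->].
  by rewrite /Order.max; case: ifP => _; [exists b | exists a].
- by move=> i ie; exists i.
Qed.

Lemma emin_attained : e != set0 -> exists2 b, b \in e & emin e f = f b.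
Proof.
case/set0Pn=> u ue; rewrite /emin.
case: pickP => [u0 u0e|/(_ u)]; last by rewrite ue.
apply: (big_ind (fun y => exists2 b, b \in e & y = f b)).
- by exists u0.
- move=> x y [a ae ->] [b be ->].
  by rewrite /Order.min; case: ifP => _; [exists a | exists b].
- by move=> i ie; exists i.
Qed.

Lemma emax_emin_at_distinct : (1 < #|e|)%N ->
  exists a b, [/\ a \in e, b \in e, a != b, emax e f = f a & emin e f = f b].
Proof.
move=> e_gt1; have e_ne0 : e != set0 by rewrite -card_gt0 ltnW.
have [a ae maxE] := emax_attained e_ne0.
have [b be minE] := emin_attained e_ne0.
have [eq_ab | ab] := eqVneq a b; last by exists a, b.
rewrite -{b be}eq_ab in minE.
have [c] : exists c, c \in e :\ a.
  by apply/card_gt0P; rewrite (cardsD1 a e) ae in e_gt1.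
rewrite in_setD1 => /andP[ca ce]; exists a, c; split; rewrite 1?eq_sym //.
by apply/le_anti; rewrite emin_le //= minE -maxE le_emax.
Qed.

End Extrema.

Lemma sum_pairs_sym (V : nmodType) n (e : {set 'I_n}) (F : 'I_n -> 'I_n -> V) :
  (forall u v, F u v = F v u) ->
  \sum_(u in e) \sum_(v in e) F u v =
  (\sum_(u in e) \sum_(v in e | (u < v)%N) F u v) *+ 2 + \sum_(u in e) F u u.
Proof.
move=> Fsym.
have splitF u : u \in e -> \sum_(v in e) F u v =
    \sum_(v in e | (u < v)%N) F u v + (\sum_(v in e | (v < u)%N) F u v + F u u).
  move=> ue; rewrite (bigID (fun v : 'I_n => (u < v)%N)) /=; congr (_ + _).
  rewrite (bigD1 u) /=; last by rewrite ue ltnn.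
  rewrite addrC; congr (_ + _); apply: eq_bigl => v.
  by rewrite -andbA -leqNgt -val_eqE /=; case: ltngtP; rewrite ?andbF ?andbT.
rewrite (eq_bigr _ splitF) !big_split /= mulr2n -addrA; congr (_ + (_ + _)).
rewrite (exchange_big_dep (mem e)) /=; last by move=> u v _ /andP[].
apply: eq_bigr => u ue.
by apply: eq_big => [v | v _]; [rewrite ue | exact: Fsym].
Qed.

Lemma sum_pairs_sqrD (R : numDomainType) n (e : {set 'I_n}) (h : 'I_n -> R) :
  \sum_(u in e) \sum_(v in e | (u < v)%N) (h u + h v) ^+ 2 =
  (#|e|%:R - 2) * \sum_(u in e) h u ^+ 2 + (\sum_(u in e) h u) ^+ 2.
Proof.
set S1 := \sum_(u in e) h u; set S2 := \sum_(u in e) h u ^+ 2.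
have sqrS1 : S1 ^+ 2 = \sum_(u in e) \sum_(v in e) h u * h v.
  by rewrite expr2 big_distrlr.
have full : \sum_(u in e) \sum_(v in e) (h u + h v) ^+ 2 =
    (S2 *+ #|e|) *+ 2 + S1 ^+ 2 *+ 2.
  transitivity
    (\sum_(u in e) (h u ^+ 2 *+ #|e| + (\sum_(v in e) h u * h v) *+ 2 + S2)).
    apply: eq_bigr => u _; under eq_bigr do rewrite sqrrD.
    by rewrite !big_split /= sumr_const mulr2n.
  by rewrite big_split big_split /= sumr_const !sumrMnl -/S2 sqrS1 mulr2n; ring.
have diag : \sum_(u in e) (h u + h u) ^+ 2 = S2 *+ 4.
  by rewrite /S2 -sumrMnl; apply: eq_bigr => u _; ring.
apply: (@pmulrnI _ 2) => //; apply: (addIr (S2 *+ 4)).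
rewrite -{1}diag.
rewrite -(@sum_pairs_sym _ _ e (fun u v => (h u + h v) ^+ 2)) => [|u v].
  by rewrite full; ring.
by rewrite addrC.
Qed.

Lemma cardsD2 (T : finType) (A : {set T}) a b :
  a \in A -> b \in A -> a != b -> #|A| = #|A :\ a :\ b|.+2.
Proof.
move=> aA bA ab; have bAa : b \in A :\ a by rewrite in_setD1 eq_sym ab.
by rewrite (cardsD1 a A) (cardsD1 b (A :\ a)) aA bAa.
Qed.

Definition pair_gap (R : comRingType) n (e : {set 'I_n}) (f : 'I_n -> R)
    (a b : 'I_n) : R :=
  #|e|%:R * \sum_(x in e :\ a :\ b) f x ^+ 2
  + (\sum_(x in e :\ a :\ b) (f a - f x) * (f x - f b)) *+ 2
  + (\sum_(x in e :\ a :\ b) f x) ^+ 2.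

Lemma pair_gapE (R : comRingType) n (e : {set 'I_n}) (f : 'I_n -> R) a b :
  a \in e -> b \in e -> a != b ->
  (#|e|%:R - 2) * \sum_(u in e) f u ^+ 2 + (\sum_(u in e) f u) ^+ 2 =
  (#|e|%:R - 1) * (f a + f b) ^+ 2 + pair_gap e f a b.
Proof.
move=> ae be ab; have be' : b \in e :\ a by rewrite in_setD1 eq_sym ab.
rewrite /pair_gap (cardsD2 ae be ab) !(big_setD1 a ae) !(big_setD1 b be') /=.
set r := #|e :\ a :\ b|.
set S1 := \sum_(x in _) f x; set S2 := \sum_(x in _) f x ^+ 2.
have -> : \sum_(x in e :\ a :\ b) (f a - f x) * (f x - f b) =
    (f a + f b) * S1 - (f a * f b) *+ r - S2.
  rewrite /S1 /S2 mulr_sumr -sumr_const -!sumrB; apply: eq_bigr => x _; ring.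
ring.
Qed.

Lemma sum_pairs_sqrD_gap (R : numFieldType) n (e : {set 'I_n}) (f : 'I_n -> R)
    a b :
  a \in e -> b \in e -> a != b ->
  \sum_(u in e) \sum_(v in e | (u < v)%N) (#|e|%:R - 1)^-1 * (f u + f v) ^+ 2 =
  (f a + f b) ^+ 2 + (#|e|%:R - 1)^-1 * pair_gap e f a b.
Proof.
move=> ae be ab; have k1_neq0 : #|e|%:R - 1 != 0 :> R.
  by rewrite (cardsD2 ae be ab) -addn1 natrD addrK pnatr_eq0.
under eq_bigr do rewrite -mulr_sumr.
by rewrite -mulr_sumr sum_pairs_sqrD (pair_gapE f ae be ab) mulrDr mulKf.
Qed.

Section PairGapSign.

Variables (R : realDomainType) (n : nat) (e : {set 'I_n}) (f : 'I_n -> R).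
Variables a b : 'I_n.
Hypothesis f_between : {in e, forall x, f b <= f x <= f a}.

Let in_rest x : x \in e :\ a :\ b -> x \in e.
Proof. by rewrite !in_setD1 => /and3P[]. Qed.

Let sum_sqr_ge0 : 0 <= \sum_(x in e :\ a :\ b) f x ^+ 2.
Proof. by apply: sumr_ge0 => x _; rewrite sqr_ge0. Qed.

Let sum_spread_ge0 : 0 <= \sum_(x in e :\ a :\ b) (f a - f x) * (f x - f b).
Proof.
apply: sumr_ge0 => x /in_rest/f_between/andP[fbx fxa].
by rewrite mulr_ge0 ?subr_ge0.
Qed.

Lemma pair_gap_ge0 : 0 <= pair_gap e f a b.
Proof.
by rewrite /pair_gap !addr_ge0 ?sqr_ge0 ?mulrn_wge0 ?mulr_ge0 ?ler0n.
Qed.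

Lemma pair_gap_eq0 : a \in e ->
  pair_gap e f a b = 0 <->
  #|e :\ a :\ b| = 0%N \/ {in e :\ a :\ b, forall x, f x = 0} /\ f a * f b = 0.
Proof.
move=> ae; have k_neq0 : #|e|%:R != 0 :> R.
  by rewrite pnatr_eq0 -lt0n card_gt0; apply/set0Pn; exists a.
have spread_vanish : {in e :\ a :\ b, forall x, f x = 0} ->
    \sum_(x in e :\ a :\ b) (f a - f x) * (f x - f b) =
    - (f a * f b) *+ #|e :\ a :\ b|.
  move=> f0; rewrite -sumr_const; apply: eq_bigr => x /f0->.
  by rewrite subr0 sub0r mulrN.
rewrite /pair_gap; split.
- move/eqP.
  rewrite paddr_eq0 ?sqr_ge0 ?addr_ge0 ?mulr_ge0 ?mulrn_wge0 ?ler0n //.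
  rewrite paddr_eq0 ?mulr_ge0 ?mulrn_wge0 ?ler0n // mulf_eq0 (negPf k_neq0) /=.
  case/andP=> /andP[/eqP sqr0 spread0] _.
  have f0 : {in e :\ a :\ b, forall x, f x = 0}.
    move=> x xr; apply/eqP; rewrite -sqrf_eq0; apply/eqP.
    by apply: (psumr_eq0P _ sqr0) => // y _; rewrite sqr_ge0.
  move: spread0; rewrite spread_vanish // !mulrn_eq0 oppr_eq0 /=.
  by case/orP=> /eqP; [left | right].
- move=> cond.
  have f0 : {in e :\ a :\ b, forall x, f x = 0}.
    by case: cond => [/cards0_eq-> x | [] //]; rewrite inE.
  have fab_r0 : (f a * f b) *+ #|e :\ a :\ b| = 0.
    by case: cond => [-> | [_ ->]]; rewrite ?mulr0n ?mul0rn.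
  rewrite spread_vanish // mulNrn fab_r0 oppr0 mul0rn.
  rewrite !big1 => [|x /f0->|x /f0->] //.
  all: by rewrite expr2 !mulr0 ?addr0.
Qed.

Lemma card_support_le1 : a \in e -> b \in e -> a != b ->
  (#|[set v in e | f v != 0%R]| <= 1)%N <->
  {in e :\ a :\ b, forall x, f x = 0} /\ f a * f b = 0.
Proof.
move=> ae be ab; split => [/card_le1_eqP supp1 | [f0 fab0]].
- have nz_eq p q : p \in e -> q \in e -> f p != 0 -> f q != 0 -> p = q.
    by move=> pe qe fp fq; apply: supp1; rewrite inE ?pe ?qe.
  split.
  + move=> x xr; move: (xr); rewrite !in_setD1 => /and3P[xb xa xe].
    have /andP[fbx fxa] := f_between xe.
    case: (ltgtP (f x) 0) => // [fx_lt0 | fx_gt0].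
    * case/negP: xb; apply/eqP/nz_eq; rewrite ?ltr0_neq0 //.
      exact: le_lt_trans fx_lt0.
    * case/negP: xa; apply/eqP/nz_eq; rewrite ?lt0r_neq0 //.
      exact: lt_le_trans fxa.
  + apply/eqP; apply: contraTT ab; rewrite mulf_eq0 negb_or => /andP[fa fb].
    by rewrite negbK; apply/eqP/nz_eq.
- have supp_ab v : v \in e -> f v != 0 -> (v == a) || (v == b).
    move=> ve; apply: contraR; rewrite negb_or => /andP[va vb].
    by apply/eqP/f0; rewrite !in_setD1 va vb.
  suff [c supp_c] : exists c, [set v in e | f v != 0] \subset [set c].
    by rewrite -(cards1 c) subset_leq_card.
  move/eqP: fab0; rewrite mulf_eq0 => /orP[] /eqP f_zero; [exists b | exists a].
  all: apply/subsetP => v; rewrite !inE => /andP[ve fv].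
  all: case/orP: (supp_ab v ve fv) => /eqP vE //.
  all: by rewrite vE f_zero eqxx in fv.
Qed.

End PairGapSign.

Theorem lemma7 (R : realFieldType) (n : nat) (E : {set {set 'I_n}})
  (w : {set 'I_n} -> R) (f : 'I_n -> R) (e : {set 'I_n}) :
  hypergraph E w -> e \in E -> (2 <= rank e)%N ->
  let lhs := (emax e f + emin e f) ^+ 2 in
  let rhs := \sum_(u in e) \sum_(v in e | (u < v)%N)
               ((rank e)%:R - 1)^-1 * (f u + f v) ^+ 2 in
  lhs <= rhs /\
  (lhs = rhs <-> ((#|[set v in e | f v != 0%R]| <= 1)%N \/ rank e = 2%N)).
Proof.
rewrite /rank => _ _ e_gt1.
have [a [b [ae be ab maxE minE]]] := emax_emin_at_distinct f e_gt1.
have f_between : {in e, forall x, f b <= f x <= f a}.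
  by move=> x xe; rewrite -maxE -minE emin_le ?le_emax.
have inv_gt0 : 0 < (#|e|%:R - 1 : R)^-1.
  by rewrite invr_gt0 (cardsD2 ae be ab) -addn1 natrD addrK ltr0Sn.
rewrite maxE minE (sum_pairs_sqrD_gap f ae be ab).
split; first by rewrite lerDl mulr_ge0 ?(ltW inv_gt0) ?(pair_gap_ge0 f_between).
have -> : (f a + f b) ^+ 2 =
    (f a + f b) ^+ 2 + (#|e|%:R - 1)^-1 * pair_gap e f a b
    <-> pair_gap e f a b = 0.
  split=> [/esym/eqP | ->]; last by rewrite mulr0 addr0.
  by rewrite -subr_eq0 addrAC subrr add0r mulf_eq0 gt_eqF //= => /eqP.
rewrite (pair_gap_eq0 f_between) // (card_support_le1 f_between) //.
rewrite (cardsD2 ae be ab).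
by split=> [[-> | ?] | [? | [->]]]; [right | left | right | left].
Qed.
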